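(* Let $R$ be a ring and $n\ge 1$ an integer. Then $R$ is NJ-symmetric if and only if the ring $T_n(R)$ of $n\times n$ upper triangular matrices over $R$ is NJ-symmetric.
   Context: Rings are associative with identity. $N(S)$ is the set of nilpotent elements, $J(S)$ the Jacobson radical of a ring $S$. $S$ is NJ-symmetric if for all $a,b,c\in S$, $abc\in N(S)$ implies $bac\in J(S)$. *)

From HB Require Import structures.
From mathcomp Require Import all_boot all_order all_algebra.
Set Implicit Arguments. Unset Strict Implicit. Unset Printing Implicit Defensive.
Import GRing.Theory.
Local Open Scope ring_scope.

Definition nilpotent_el (S : nzRingType) (x : S) : Prop := exists k : nat, x ^+ k = 0.

Definition left_ideal (S : nzRingType) (I : S -> Prop) : Prop :=
  [/\ I 0, (forall x y, I x -> I y -> I (x + y)) & (forall r x, I x -> I (r * x))].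

Definition maximal_left_ideal (S : nzRingType) (I : S -> Prop) : Prop :=
  [/\ left_ideal I, ~ I 1 &
      forall K : S -> Prop, left_ideal K -> ~ K 1 -> (forall x, I x -> K x) ->
        forall x, K x -> I x].

Definition jacobson_el (S : nzRingType) (x : S) : Prop :=
  forall I : S -> Prop, maximal_left_ideal I -> I x.

Definition NJ_symmetric (S : nzRingType) : Prop :=
  forall a b c : S, nilpotent_el (a * b * c) -> jacobson_el (b * a * c).

(* Indexed as T_(n.+1)(R), i.e. n.+1 x n.+1 matrices, so that the size is >= 1. *)

Definition upper_trig {R : nzRingType} {n : nat} : {pred 'M[R]_n.+1} :=
  fun A => [forall i : 'I_n.+1, forall j : 'I_n.+1, (j < i)%N ==> (A i j == 0)].

Lemma upper_trigP (R : nzRingType) n (A : 'M[R]_n.+1) :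
  reflect (forall i j : 'I_n.+1, (j < i)%N -> A i j = 0) (A \in upper_trig).
Proof.
apply: (iffP forallP) => [H i j lt_ji | H i].
  by move: (H i) => /forallP /(_ j) /implyP /(_ lt_ji) /eqP.
by apply/forallP => j; apply/implyP => lt_ji; apply/eqP; apply: H.
Qed.

Lemma upper_trig_subring_closed (R : nzRingType) n :
  subring_closed (@upper_trig R n).
Proof.
split.
- apply/upper_trigP => i j lt_ji; rewrite mxE; case: eqP => [ij|//].
  by rewrite ij ltnn in lt_ji.
- move=> A B /upper_trigP HA /upper_trigP HB; apply/upper_trigP => i j lt_ji.
  by rewrite !mxE HA // HB // subrr.
- move=> A B /upper_trigP HA /upper_trigP HB; apply/upper_trigP => i j lt_ji.
  rewrite !mxE big1 // => k _.
  case: (ltnP k i) => [lt_ki | le_ik]; first by rewrite HA // mul0r.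
  by rewrite HB ?mulr0 // (leq_trans lt_ji le_ik).
Qed.

Section UpperTriangular.
Variables (R : nzRingType) (n : nat).

Record upper_trig_mx := UpperTrigMx {
  utval :> 'M[R]_n.+1;
  _ : utval \in @upper_trig R n
}.

HB.instance Definition _ := [isSub for utval].
HB.instance Definition _ := [Choice of upper_trig_mx by <:].
HB.instance Definition _ := GRing.isSubringClosed.Build _ (@upper_trig R n)
  (upper_trig_subring_closed R n).
HB.instance Definition _ := [SubChoice_isSubNzRing of upper_trig_mx by <:].

End UpperTriangular.

Notation T_ R n := (upper_trig_mx R n.-1).

From HB Require Import structures.
From mathcomp Require Import all_boot all_order all_algebra.
From mathcomp Require Import boolp classical_sets.
Set Implicit Arguments. Unset Strict Implicit. Unset Printing Implicit Defensive.
Import GRing.Theory.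
Local Open Scope classical_set_scope.
Local Open Scope ring_scope.

(* An element x of a ring lies in J(S) iff 1 - r x is left invertible for
   every r.  So an upper triangular matrix M lies in J(T_n(R)) as soon as its
   diagonal entries lie in J(R): the diagonal entries of 1 - X M are then left
   invertible, and multiplying by a diagonal matrix D of left inverses gives
   D (1 - X M) = 1 - N with N strictly upper triangular, hence nilpotent.
   The diagonal coefficients T_n(R) -> R are ring morphisms, so if ABC is
   nilpotent then so is every a_ii b_ii c_ii; this gives one implication.
   Conversely, R is a retract of T_n(R) through scalar matrices and the (0,0)
   coefficient, and NJ-symmetry passes to retracts because surjective ring
   morphisms map the Jacobson radical into the Jacobson radical. *)

Section JacobsonRadical.
Variable S : nzRingType.
Implicit Types (x : S) (I L : set S).

Definition left_invertible x := exists u, u * x = 1.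

Lemma left_invertible_1B_nilpotent x : nilpotent_el x -> left_invertible (1 - x).
Proof.
case=> k xk0; exists (\sum_(i < k) x ^+ i).
suff -> : (\sum_(i < k) x ^+ i) * (1 - x) = 1 - x ^+ k by rewrite xk0 subr0.
elim: k {xk0} => [|k IHk]; first by rewrite big_ord0 mul0r expr0 subrr.
by rewrite big_ord_recr mulrDl IHk mulrBr mulr1 -exprSr addrA subrK.
Qed.

Lemma left_ideal_principal (a : S) : left_ideal [set y | exists s, y = s * a].
Proof.
split; first by exists 0; rewrite mul0r.
  by move=> _ _ [s ->] [t ->]; exists (s + t); rewrite mulrDl.
by move=> t _ [s ->]; exists (t * s); rewrite mulrA.
Qed.

Lemma left_ideal_adjoin I (a : S) :
  left_ideal I -> left_ideal [set y | exists i r, I i /\ y = i + r * a].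
Proof.
case=> I0 ID IM; split; first by exists 0, 0; rewrite mul0r addr0.
  move=> _ _ [i [r [Ii ->]]] [j [s [Ij ->]]].
  by exists (i + j), (r + s); rewrite mulrDl addrACA; split; first exact: ID.
move=> t _ [i [r [Ii ->]]]; exists (t * i), (t * r).
by rewrite mulrDr mulrA; split; first exact: IM.
Qed.

Lemma left_ideal_bigcup (J : Type) (D : set J) (F : J -> set S) :
  D !=set0 -> (forall j, D j -> left_ideal (F j)) ->
  total_on D (fun i j => F i `<=` F j) -> left_ideal (\bigcup_(j in D) F j).
Proof.
move=> [j0 Dj0] idF Ftot; split.
- by exists j0 => //; case: (idF j0 Dj0).
- move=> y z [i Di Fiy] [j Dj Fjz].
  have [Fij|Fji] := Ftot i j Di Dj.
    by exists j => //; case: (idF j Dj) => _ FD _; apply: FD => //; apply: Fij.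
  by exists i => //; case: (idF i Di) => _ FD _; apply: FD => //; apply: Fji.
- by move=> r y [i Di Fiy]; exists i => //; case: (idF i Di) => _ _; apply.
Qed.

Lemma maximal_left_ideal_exists L :
  left_ideal L -> ~ L 1 -> exists2 M, maximal_left_ideal M & L `<=` M.
Proof.
move=> idL L1.
pose P I := [/\ left_ideal I, ~ I 1 & L `<=` I].
pose le (I J : {I | P I}) := `[< sval I `<=` sval J >].
have PL : P L by split.
have [[M PM] Mmax] : exists M, premaximal le M.
  apply: (ZL_preorder (exist P L PL)).
  - by move=> I; apply/asboolP.
  - by move=> I J K /asboolP IJ /asboolP JK; apply/asboolP/(subset_trans IJ).
  move=> C Ctot; have [[I0 CI0]|C0] := pselect (C !=set0); last first.
    by exists (exist P L PL) => I CI; case: C0; exists I.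
  pose U := \bigcup_(I in C) sval I.
  have PU : P U.
    split.
    - apply: left_ideal_bigcup; first by exists I0.
        by move=> I _; case: (svalP I).
      by move=> I J CI CJ; case: (Ctot I J CI CJ) => /asboolP; [left|right].
    - by case=> I _; case: (svalP I).
    - by move=> y Ly; exists I0 => //; case: (svalP I0) => _ _; apply.
  by exists (exist P U PU) => I CI; apply/asboolP => y Iy; exists I.
case: (PM) => idM M1 LM; exists M => //; split=> // K idK K1 MK.
have PK : P K by split=> //; apply: subset_trans MK.
by have /Mmax/asboolP : le (exist P M PM) (exist P K PK) by apply/asboolP.
Qed.

Lemma jacobson_elP x : jacobson_el x <-> forall r, left_invertible (1 - r * x).
Proof.
split=> [Jx r | invx I [[I0 ID IM] I1 Imax]].
  apply: contrapT => noinv.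
  pose L := [set y | exists s, y = s * (1 - r * x)].
  have L1 : ~ L 1 by case=> s /esym Hs; apply: noinv; exists s.
  have [M maxM LM] := maximal_left_ideal_exists (left_ideal_principal _) L1.
  case: (maxM) => [[_ MD MM] M1 _]; apply: M1.
  rewrite -[1](subrK (r * x)); apply: MD; last exact: MM (Jx M maxM).
  by apply: LM; exists 1; rewrite mul1r.
apply: contrapT => Ix.
pose K := [set y | exists i r, I i /\ y = i + r * x].
have [i [r [Ii E]]] : K 1.
  apply: contrapT => K1; apply: Ix; apply: (Imax K) => //.
  - exact: left_ideal_adjoin.
  - by move=> y Iy; exists y, 0; rewrite mul0r addr0.
  - by exists 0, 1; rewrite mul1r add0r.
apply: I1; have [u <-] := invx r; apply: IM.
by rewrite E addrK.
Qed.

End JacobsonRadical.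

Lemma rmorph_nilpotent (S S' : nzRingType) (f : {rmorphism S -> S'}) (x : S) :
  nilpotent_el x -> nilpotent_el (f x).
Proof. by case=> k xk0; exists k; rewrite -rmorphXn xk0 rmorph0. Qed.

Lemma rmorph_jacobson (S S' : nzRingType) (f : {rmorphism S -> S'}) (x : S) :
  (forall y, exists x, f x = y) -> jacobson_el x -> jacobson_el (f x).
Proof.
move=> f_surj /jacobson_elP invx; apply/jacobson_elP => y.
have [r <-] := f_surj y; have [u Hu] := invx r; exists (f u).
by rewrite -rmorphM -(rmorph1 f) -rmorphB -rmorphM Hu.
Qed.

Lemma NJ_symmetric_retract (S S' : nzRingType)
    (f : {rmorphism S -> S'}) (g : {rmorphism S' -> S}) :
  cancel f g -> NJ_symmetric S' -> NJ_symmetric S.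
Proof.
move=> fK NJ' a b c abc_nil.
have g_surj x : exists y, g y = x by exists (f x); rewrite fK.
have : nilpotent_el (f a * f b * f c) by rewrite -!rmorphM; apply: rmorph_nilpotent.
by move=> /NJ' /(rmorph_jacobson g_surj); rewrite !rmorphM !fK.
Qed.

Lemma strictly_upper_mx_nilpotent (R : nzRingType) n (N : 'M[R]_n.+1) :
  (forall i j : 'I_n.+1, (j <= i)%N -> N i j = 0) -> N ^+ n.+1 = 0.
Proof.
move=> N_strict; apply/matrixP => i j; rewrite mxE.
suff Nk0 k (i' j' : 'I_n.+1) : (j' < i' + k)%N -> (N ^+ k) i' j' = 0.
  by apply: Nk0; rewrite addnS ltnS (leq_trans (ltnSE (ltn_ord j))) ?leq_addl.
elim: k i' j' => [|k IHk] i' j' lt_ji.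
  by rewrite expr0 mxE; case: eqP => // eq_ij; rewrite eq_ij addn0 ltnn in lt_ji.
rewrite exprS mxE big1 // => l _.
have [le_li|lt_il] := leqP l i'; first by rewrite N_strict ?mul0r.
by rewrite IHk ?mulr0 // (leq_trans lt_ji) // addnS -addSn leq_add2r.
Qed.

Section UpperTriangular.
Variables (R : nzRingType) (m : nat).
Local Notation T := (upper_trig_mx R m).
Implicit Types (A B M P : T).

Lemma upper_trig_lower0 A (i j : 'I_m.+1) : (j < i)%N -> A i j = 0.
Proof. by move: (valP A) => /upper_trigP; apply. Qed.

Lemma upper_trig_diagM A B i : val (A * B) i i = val A i i * val B i i.
Proof.
rewrite rmorphM mxE (bigD1 i) //= big1 ?addr0 // => k ne_ki.
have [lt_ki|lt_ik|eq_ki] := ltngtP k i; last by rewrite (val_inj eq_ki) eqxx in ne_ki.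
  by rewrite upper_trig_lower0 ?mul0r.
by rewrite (upper_trig_lower0 B) ?mulr0.
Qed.

Lemma upper_trig_diag1B A i : val (1 - A) i i = 1 - val A i i.
Proof. by rewrite rmorphB rmorph1 !mxE eqxx. Qed.

Definition upper_trig_diag_coef (i : 'I_m.+1) A : R := val A i i.

Fact upper_trig_diag_coef_is_zmod_morphism i : zmod_morphism (upper_trig_diag_coef i).
Proof. by move=> A B; rewrite /upper_trig_diag_coef rmorphB !mxE. Qed.

Fact upper_trig_diag_coef_is_monoid_morphism i : monoid_morphism (upper_trig_diag_coef i).
Proof.
split=> [|A B]; last exact: upper_trig_diagM.
by rewrite /upper_trig_diag_coef rmorph1 mxE eqxx.
Qed.

HB.instance Definition _ i := GRing.isZmodMorphism.Build T R (upper_trig_diag_coef i)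
  (upper_trig_diag_coef_is_zmod_morphism i).
HB.instance Definition _ i := GRing.isMonoidMorphism.Build T R (upper_trig_diag_coef i)
  (upper_trig_diag_coef_is_monoid_morphism i).

Lemma diag_mx_upper_trig (d : 'rV[R]_m.+1) : diag_mx d \in @upper_trig R m.
Proof.
apply/upper_trigP => i j lt_ji; rewrite mxE.
by case: eqP => [eq_ij|_]; [rewrite eq_ij ltnn in lt_ji | rewrite mulr0n].
Qed.

Definition upper_trig_diag_mx (d : 'rV[R]_m.+1) : T := UpperTrigMx (diag_mx_upper_trig d).

Definition upper_trig_scalar (a : R) : T := upper_trig_diag_mx (const_mx a).

Lemma upper_trig_scalarE a : val (upper_trig_scalar a) = a%:M.
Proof. exact: diag_const_mx. Qed.

Fact upper_trig_scalar_is_zmod_morphism : zmod_morphism upper_trig_scalar.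
Proof.
move=> a b; apply: val_inj; rewrite upper_trig_scalarE rmorphB raddfB.
by congr (_ - _); apply/esym/upper_trig_scalarE.
Qed.

Fact upper_trig_scalar_is_monoid_morphism : monoid_morphism upper_trig_scalar.
Proof.
split=> [|a b]; apply: val_inj; rewrite upper_trig_scalarE ?rmorph1 ?rmorphM //.
by congr (_ * _); apply/esym/upper_trig_scalarE.
Qed.

HB.instance Definition _ := GRing.isZmodMorphism.Build R T upper_trig_scalar
  upper_trig_scalar_is_zmod_morphism.
HB.instance Definition _ := GRing.isMonoidMorphism.Build R T upper_trig_scalar
  upper_trig_scalar_is_monoid_morphism.

Lemma upper_trig_scalarK i : cancel upper_trig_scalar (upper_trig_diag_coef i).
Proof. by move=> a; rewrite /upper_trig_diag_coef upper_trig_scalarE mxE eqxx. Qed.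

Lemma upper_trig_left_invertible P :
  (forall i, left_invertible (P i i)) -> left_invertible P.
Proof.
move=> /fin_all_exists[w Pw].
pose D := upper_trig_diag_mx (\row_i w i); pose N := 1 - D * P.
have N_strict (i j : 'I_m.+1) : (j <= i)%N -> N i j = 0.
  rewrite leq_eqVlt => /orP[/eqP/val_inj->|]; last exact: upper_trig_lower0.
  by rewrite upper_trig_diag1B upper_trig_diagM !mxE eqxx mulr1n Pw subrr.
have [u uN] : left_invertible (1 - N).
  apply: left_invertible_1B_nilpotent; exists m.+1; apply: val_inj.
  by rewrite rmorphXn rmorph0; apply: strictly_upper_mx_nilpotent.
by exists (u * D); rewrite -mulrA -uN opprB addrC subrK.
Qed.

Lemma upper_trig_jacobson M : (forall i, jacobson_el (M i i)) -> jacobson_el M.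
Proof.
move=> JM; apply/jacobson_elP => X; apply: upper_trig_left_invertible => i.
rewrite upper_trig_diag1B upper_trig_diagM.
by move/jacobson_elP: (JM i); apply.
Qed.

End UpperTriangular.

Theorem corollary2p23 (R : nzRingType) (n : nat) (hn : (1 <= n)%N) :
  NJ_symmetric R <-> NJ_symmetric (T_ R n).
Proof.
case: n hn => // m _ /=; split=> [NJ_R A B C ABC_nil | NJ_T].
  apply: upper_trig_jacobson => i; rewrite !upper_trig_diagM; apply: NJ_R.
  by rewrite -!upper_trig_diagM; apply: (rmorph_nilpotent (upper_trig_diag_coef i)).
exact: NJ_symmetric_retract (@upper_trig_scalarK R m ord0) NJ_T.
Qed.
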